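(* Let $k\ge2$ and let $\alpha,\beta,\tau$ be the group formulas $\alpha(x)=\forall y\,([y^{-1}xy,x]=e)$, $\beta(y)=\forall x\,(\alpha(x)\rightarrow y^{-1}xy=x^k)$, and $\tau(x,y,h,b_1)=\alpha(x)\wedge\alpha(y)\wedge([h,b_1]=e)\wedge\beta(b_1)\wedge\forall v\,\forall w\,\big([v,b_1]=[w,b_1]=e\wedge\gamma(h,v,w,b_1)\rightarrow\exists u\,(\alpha(u)\wedge[v,y]=[w,x][v,[u,v]])\big)$, where $\gamma(x,y,z,t)$ is a group formula such that for every $b_1\in Ab$ and all $n,l,m\in\mathbb{Z}$, $BS(1,k)\models\gamma(b_1^n,b_1^l,b_1^m,b_1)$ iff $nl=m$. Then the formula $\pi(x)=\forall c\,\forall v\,\big(\alpha(c)\wedge\beta(v)\rightarrow\exists w\,\exists h\,([w,v]=e\wedge\tau(x,w^{-1}cw,h,v))\big)$ defines the set $A_1$ in $BS(1,k)$.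
   Context: $BS(1,k)=\langle a,b\mid b^{-1}ab=a^k\rangle$, identified with $\mathbb{Z}[1/k]\rtimes\mathbb{Z}$ (pairs $(y,m)$, $y\in\mathbb{Z}[1/k]=\{zk^i:z,i\in\mathbb{Z}\}$, product $(y_1,m_1)(y_2,m_2)=(y_1+y_2k^{-m_1},m_1+m_2)$), with $a=(1,0)$, $b=(0,1)$; $a^y=(y,0)$. $Ab=\{a^yb:y\in\mathbb{Z}[1/k]\}$ and $A_1=\{a^y: y\text{ a unit of }\mathbb{Z}[1/k]\}$. The commutator is $[x,y]=x^{-1}y^{-1}xy$. *)

(* BS(1,k) = Z[1/k] ⋊ Z, realised inside Q × Z. *)
From mathcomp Require Import all_boot all_order all_algebra.
Set Implicit Arguments. Unset Strict Implicit. Unset Printing Implicit Defensive.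
Import Order.TTheory GRing.Theory Num.Theory.
Local Open Scope ring_scope.

Section BS.
Variable k : nat.

Definition G := (rat * int)%type.

Definition inZk (y : rat) : Prop :=
  exists (z i : int), y = z%:~R * (k%:R : rat) ^ i.

Definition inBS (g : G) : Prop := inZk g.1.

Definition gmul (p q : G) : G :=
  (p.1 + q.1 * (k%:R : rat) ^ (- p.2), p.2 + q.2).
Definition ginv (p : G) : G := (- (p.1 * (k%:R : rat) ^ p.2), - p.2).
Definition gone : G := (0, 0).

Definition ga : G := (1, 0).
Definition gb : G := (0, 1).
Definition gapow (y : rat) : G := (y, 0).

Definition gpow (g : G) (n : nat) : G := iter n (gmul g) gone.
Definition gzpow (g : G) (m : int) : G :=
  match m with
  | Posz n => gpow g n
  | Negz n => gpow (ginv g) n.+1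
  end.

Definition gcomm (x y : G) : G := gmul (gmul (gmul (ginv x) (ginv y)) x) y.
Definition gconj (x y : G) : G := gmul (gmul (ginv y) x) y.

Definition inAb (g : G) : Prop := exists y, inZk y /\ g = gmul (gapow y) gb.

Definition unitZk (y : rat) : Prop :=
  inZk y /\ exists y', inZk y' /\ y * y' = 1.
Definition inA1 (g : G) : Prop := exists y, unitZk y /\ g = gapow y.

Inductive gterm :=
  | TVar of nat | TOne | TMul of gterm & gterm | TInv of gterm.

Inductive gform :=
  | FEq of gterm & gterm
  | FFalse
  | FNot of gform
  | FAnd of gform & gform
  | FOr of gform & gform
  | FImp of gform & gform
  | FAll of nat & gform
  | FEx of nat & gform.

Fixpoint teval (env : nat -> G) (t : gterm) : G :=
  match t with
  | TVar i => env i
  | TOne => gone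
  | TMul s u => gmul (teval env s) (teval env u)
  | TInv s => ginv (teval env s)
  end.

Definition upd (env : nat -> G) (i : nat) (g : G) : nat -> G :=
  fun j => if j == i then g else env j.

Fixpoint sat (env : nat -> G) (f : gform) : Prop :=
  match f with
  | FEq s u => teval env s = teval env u
  | FFalse => False
  | FNot g => ~ sat env g
  | FAnd g h => sat env g /\ sat env h
  | FOr g h => sat env g \/ sat env h
  | FImp g h => sat env g -> sat env h
  | FAll i g => forall x, inBS x -> sat (upd env i x) g
  | FEx i g => exists x, inBS x /\ sat (upd env i x) g
  end.

(* gamma(x,y,z,t): the formula with its variables 0,1,2,3 set to x,y,z,t
   (other variables, if any occur free, are set to e) *)
Definition gsat4 (gam : gform) (x y z t : G) : Prop :=
  sat (fun i => nth gone [:: x; y; z; t] i) gam.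

Definition alpha (x : G) : Prop :=
  forall y, inBS y -> gcomm (gconj x y) x = gone.

Definition beta (y : G) : Prop :=
  forall x, inBS x -> alpha x -> gconj x y = gpow x k.

Definition tau (gam : gform) (x y h b1 : G) : Prop :=
  alpha x /\ alpha y /\ gcomm h b1 = gone /\ beta b1 /\
  forall v, inBS v -> forall w, inBS w ->
    (gcomm v b1 = gone /\ gcomm w b1 = gone /\ gsat4 gam h v w b1) ->
    exists u, inBS u /\ alpha u /\
      gcomm v y = gmul (gcomm w x) (gcomm v (gcomm u v)).

Definition piF (gam : gform) (x : G) : Prop :=
  forall c, inBS c -> forall v, inBS v ->
    alpha c /\ beta v ->
    exists w, inBS w /\ exists h, inBS h /\
      gcomm w v = gone /\ tau gam x (gconj c w) h v.

End BS.

From Pilot Require Import Defs.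
From mathcomp Require Import all_boot all_order all_algebra.
From mathcomp Require Import ring zify.
Set Implicit Arguments. Unset Strict Implicit. Unset Printing Implicit Defensive.
Import Order.TTheory GRing.Theory Num.Theory.
Local Open Scope ring_scope.

(* In BS(1,k) = Z[1/k] ⋊ Z, alpha cuts out the normal subgroup A = Z[1/k],
   beta the coset Ab, and the centraliser of any a^z b is its cyclic group.
   With c = a^t, v = a^z b, x = a^r, w = v^N, h = v^n, v' = v^l, u = a^s the
   equation of tau reads
     t k^N (1 - k^l) = r (1 - k^(nl)) + s (k^l - 1) (1 - k^l),
   and as (k^l)^n = 1 + n (k^l - 1) modulo (k^l - 1)^2 Z[1/k], it says that
   t k^N = r n modulo (k^l - 1) Z[1/k]. If r is a unit, pick N with
   n := t k^N / r integral and the congruence holds for every l. Conversely,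
   for c = a and v = b the number k^N - r n, whose numerator is fixed, is a
   multiple of k^l - 1 for arbitrarily large l, hence is 0: r divides k^N. *)

Section BaumslagSolitar.
Variable k : nat.
Hypothesis k_ge2 : (2 <= k)%N.

Local Notation K := (k%:R : rat).
Local Notation inZk := (inZk k).
Local Notation inBS := (inBS k).
Local Notation gmul := (gmul k).
Local Notation ginv := (ginv k).
Local Notation gcomm := (gcomm k).
Local Notation gconj := (gconj k).
Local Notation gpow := (gpow k).
Local Notation gzpow := (gzpow k).

Lemma K_gt1 : 1 < K.
Proof. by rewrite ltr1n. Qed.

Lemma K_neq0 : K != 0.
Proof. by rewrite gt_eqF // (lt_trans ltr01 K_gt1). Qed.

Lemma expK_eq1 (z : int) : (K ^ z == 1) = (z == 0).
Proof. by rewrite pexprz_eq1 ?ler0n // (gt_eqF K_gt1) orbF. Qed.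

Lemma inZkE y : inZk y <-> exists (N : nat) (z : int), y * K ^+ N = z%:~R.
Proof.
split=> [[z [[n|n] ->]]|[N [z yKN]]].
- by exists 0%N, (z * (k ^ n)%:Z); rewrite mulr1 intrM -pmulrn natrX.
- exists n.+1, z; rewrite NegzE -exprnN -mulrA mulVf ?mulr1 //.
  by rewrite expf_neq0 ?K_neq0.
- exists z, (- (N%:Z)); rewrite -yKN -mulrA -exprnN mulfV ?mulr1 //.
  by rewrite expf_neq0 ?K_neq0.
Qed.

Lemma Zk_int (z : int) : inZk z%:~R.
Proof. by apply/inZkE; exists 0%N, z; rewrite mulr1. Qed.

Lemma Zk_expK (i : int) : inZk (K ^ i).
Proof. by exists 1, i; rewrite mul1r. Qed.

Lemma Zk_add y1 y2 : inZk y1 -> inZk y2 -> inZk (y1 + y2).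
Proof.
move=> /inZkE [N1 [z1 e1]] /inZkE [N2 [z2 e2]]; apply/inZkE.
exists (N1 + N2)%N, (z1 * (k ^ N2)%:Z + z2 * (k ^ N1)%:Z).
rewrite intrD !intrM -!pmulrn !natrX -e1 -e2 exprD; ring.
Qed.

Lemma Zk_mul y1 y2 : inZk y1 -> inZk y2 -> inZk (y1 * y2).
Proof.
move=> /inZkE [N1 [z1 e1]] /inZkE [N2 [z2 e2]]; apply/inZkE.
by exists (N1 + N2)%N, (z1 * z2); rewrite intrM -e1 -e2 exprD; ring.
Qed.

Lemma Zk_opp y : inZk y -> inZk (- y).
Proof. by rewrite -mulN1r; apply/Zk_mul/(Zk_int (-1)). Qed.

Lemma Zk_sub y1 y2 : inZk y1 -> inZk y2 -> inZk (y1 - y2).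
Proof. by move=> Zy1 /Zk_opp; apply: Zk_add. Qed.

Lemma Zk_exp y n : inZk y -> inZk (y ^+ n).
Proof.
by move=> Zy; elim: n => [|n IHn]; [apply: (Zk_int 1) | rewrite exprS; apply: Zk_mul].
Qed.

Lemma Zk_exprn_expansion X : inZk X -> forall n : nat,
  exists2 q, inZk q & X ^+ n = 1 + n%:R * (X - 1) + (X - 1) ^+ 2 * q.
Proof.
move=> ZX; elim=> [|n [q Zq Xn]]; first by exists 0; [apply: (Zk_int 0) | ring].
exists (n%:R + X * q); first by rewrite pmulrn; apply: Zk_add (Zk_int n) (Zk_mul ZX Zq).
by rewrite exprS Xn mulrSr; ring.
Qed.

Lemma Zk_exprz_expansion X : X != 0 -> inZk X -> inZk X^-1 -> forall n : int,
  exists2 q, inZk q & X ^ n = 1 + n%:~R * (X - 1) + (X - 1) ^+ 2 * q.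
Proof.
move=> X0 ZX ZXV [n|n]; first exact: Zk_exprn_expansion.
have [q Zq XVn] := Zk_exprn_expansion ZXV n.+1.
exists (X^-1 ^+ 2 * q + n.+1%:R * X^-1).
  by rewrite pmulrn; apply: Zk_add (Zk_mul (Zk_exp 2 ZXV) Zq) (Zk_mul (Zk_int n.+1) ZXV).
by rewrite NegzE -exprnN -exprVn XVn intrN -pmulrn; field.
Qed.

Lemma gmulA p q r : gmul (gmul p q) r = gmul p (gmul q r).
Proof.
case: p q r => [p1 p2] [q1 q2] [r1 r2]; rewrite /Defs.gmul /=.
by rewrite addrA opprD expfzDr ?K_neq0 //; congr (_, _); ring.
Qed.

Lemma gmul1g p : gmul gone p = p.
Proof. by case: p => p1 p2; rewrite /Defs.gmul /= oppr0 expr0z mulr1 !add0r. Qed.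

Lemma gmulg1 p : gmul p gone = p.
Proof. by case: p => p1 p2; rewrite /Defs.gmul /= mul0r !addr0. Qed.

Lemma gmulVg p : gmul (ginv p) p = gone.
Proof.
by case: p => p1 p2; rewrite /Defs.gmul /Defs.ginv /= opprK addNr; congr (_, _); ring.
Qed.

Lemma gmulgV p : gmul p (ginv p) = gone.
Proof.
case: p => p1 p2; rewrite /Defs.gmul /Defs.ginv /= subrr mulNr -mulrA.
by rewrite -expfzDr ?K_neq0 // subrr expr0z mulr1 subrr.
Qed.

Lemma gmulKV p q : gmul (ginv p) (gmul p q) = q.
Proof. by rewrite -gmulA gmulVg gmul1g. Qed.

Lemma gmulK p q : gmul p (gmul (ginv p) q) = q.
Proof. by rewrite -gmulA gmulgV gmul1g. Qed.

Definition gcommute p q := gmul p q = gmul q p.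

Lemma gcomm_eq1 p q : gcomm p q = gone <-> gcommute p q.
Proof.
rewrite /Defs.gcomm /gcommute; split=> [pq1|pq].
- by rewrite -[RHS]gmulg1 -pq1 !gmulA gmulK gmulK.
- by rewrite !gmulA pq gmulKV gmulVg.
Qed.

Lemma gcommuteV p q : gcommute p (ginv q) -> gcommute p q.
Proof.
rewrite /gcommute => pqV.
by rewrite -[in LHS](gmulK q p) -pqV !gmulA gmulVg gmulg1.
Qed.

Lemma gzpow_commute g m : gcommute (gzpow g m) g.
Proof.
have gpow_commute h n : gcommute (gpow h n) h.
  rewrite /gcommute; elim: n => [|n IHn]; first by rewrite gmul1g gmulg1.
  by rewrite /Defs.gpow /= -/(gpow h n) gmulA IHn.
case: m => n; first exact: gpow_commute.
by apply: gcommuteV; apply: gpow_commute.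
Qed.

Lemma gzpow_snd g m : (gzpow g m).2 = g.2 * m.
Proof.
have gpow_snd h n : (gpow h n).2 = h.2 * n%:Z.
  elim: n => [|n IHn]; first by rewrite mulr0.
  by rewrite /Defs.gpow /= -/(gpow h n) IHn -addn1 PoszD; ring.
by case: m => n; rewrite gpow_snd // NegzE /=; ring.
Qed.

Lemma BS_mul p q : inBS p -> inBS q -> inBS (gmul p q).
Proof. by move=> Zp Zq; apply/Zk_add/Zk_mul/Zk_expK. Qed.

Lemma BS_zpow g m : inBS g -> inBS (gzpow g m).
Proof.
have BS_pow h n : inBS h -> inBS (gpow h n).
  by move=> BSh; elim: n => [|n IHn]; [apply: (Zk_int 0) | apply: BS_mul].
case: m => n BSg; first exact: BS_pow.
by apply: BS_pow; apply/Zk_opp/Zk_mul/Zk_expK.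
Qed.

Lemma gmul_A s t : gmul (s, 0) (t, 0) = (s + t, 0).
Proof. by rewrite /Defs.gmul /= oppr0 expr0z mulr1 addr0. Qed.

Lemma ginv_A t : ginv (t, 0) = (- t, 0).
Proof. by rewrite /Defs.ginv /= expr0z mulr1 oppr0. Qed.

Lemma gconj_A t p : gconj (t, 0) p = (t * K ^ p.2, 0).
Proof.
case: p => p1 p2; rewrite /Defs.gconj /Defs.gmul /Defs.ginv /= !addr0 !opprK.
by congr (_, _); ring.
Qed.

Lemma gcomm_gA p t : gcomm p (t, 0) = (t * (1 - K ^ p.2), 0).
Proof.
rewrite /Defs.gcomm -/(gconj (ginv (t, 0)) p) ginv_A gconj_A gmul_A.
by congr (_, _); ring.
Qed.

Lemma gcomm_Ag t p : gcomm (t, 0) p = (t * (K ^ p.2 - 1), 0).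
Proof.
rewrite /Defs.gcomm !gmulA -(gmulA _ (t, 0)) -/(gconj (t, 0) p).
by rewrite gconj_A ginv_A gmul_A; congr (_, _); ring.
Qed.

Lemma alpha_A t : alpha k (t, 0).
Proof. by move=> y _; rewrite gconj_A gcomm_Ag expr0z subrr mulr0. Qed.

Lemma alphaE x : alpha k x -> x = (x.1, 0).
Proof.
case: x => x1 x2 /(_ ga (Zk_int 1)) /gcomm_eq1.
rewrite /gcommute /Defs.gconj /Defs.gmul /Defs.ginv /= => -[x_comm _].
rewrite !(oppr0, add0r, addr0, expr0z, opprK, mul1r, mulr1) in x_comm.
have : (K ^ (- x2) - 1) ^+ 2 = 0.
  transitivity ((x1 + (-1 + x1 + K ^ (- x2)) * K ^ (- x2)) -
                (-1 + x1 + K ^ (- x2) + x1 * K ^ (- x2))); first ring.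
  by rewrite x_comm subrr.
by move/eqP; rewrite sqrf_eq0 subr_eq0 expK_eq1 oppr_eq0 => /eqP ->.
Qed.

Lemma gpow_A t n : gpow (t, 0) n = (t * n%:R, 0).
Proof.
elim: n => [|n IHn]; first by rewrite mulr0.
by rewrite /Defs.gpow /= -/(gpow (t, 0) n) IHn gmul_A mulrSr mulrDr mulr1 addrC.
Qed.

Lemma beta_Ab z : beta k (z, 1).
Proof. by move=> x _ /alphaE ->; rewrite gconj_A expr1z gpow_A. Qed.

Lemma beta_snd v : beta k v -> v.2 = 1.
Proof.
move=> /(_ ga (Zk_int 1) (alpha_A 1)); rewrite gconj_A gpow_A !mul1r -{2}(expr1z K).
by case=> /ieexprIz; apply; [apply: lt_trans K_gt1 | rewrite gt_eqF ?K_gt1].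
Qed.

Lemma centAbE z p : gcommute p (z, 1) -> p = gzpow (z, 1) p.2.
Proof.
have cent_fst q : gcommute q (z, 1) -> q.1 * (1 - K ^ -1) = z * (1 - K ^ (- q.2)).
  case: q => q1 q2; rewrite /gcommute /Defs.gmul /= => -[q_comm _].
  apply/eqP; rewrite -subr_eq0; apply/eqP.
  transitivity ((q1 + z * K ^ (- q2)) - (z + q1 * K ^ -1)); first ring.
  by rewrite q_comm subrr.
move=> p_comm; have q_snd : (gzpow (z, 1) p.2).2 = p.2 by rewrite gzpow_snd mul1r.
rewrite [LHS]surjective_pairing [RHS]surjective_pairing q_snd; congr (_, _).
have K1_neq0 : 1 - K ^ (-1) != 0 by rewrite subr_eq0 eq_sym expK_eq1.
apply: (mulIf K1_neq0); rewrite cent_fst // cent_fst ?q_snd //.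
exact: gzpow_commute.
Qed.

Lemma tau_eq_powers z t r s (l n : int) q :
  (K ^ l) ^ n = 1 + n%:~R * (K ^ l - 1) + (K ^ l - 1) ^+ 2 * q ->
  gcomm (gzpow (z, 1) l) (t, 0) =
    gmul (gcomm (gzpow (z, 1) (n * l)) (r, 0))
         (gcomm (gzpow (z, 1) l) (gcomm (s, 0) (gzpow (z, 1) l)))
  <-> (1 - K ^ l) * (t - r * n%:~R - (r * q + s) * (K ^ l - 1)) = 0.
Proof.
rewrite gcomm_Ag !gcomm_gA gmul_A !gzpow_snd !mul1r (mulrC n) -exprz_exp => ->.
set X := K ^ l; set Y := _ * (t - _ - _).
have eqY : t * (1 - X) - (r * (1 - (1 + n%:~R * (X - 1) + (X - 1) ^+ 2 * q)) +
                          s * (X - 1) * (1 - X)) = Y by rewrite /Y; ring.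
split=> [[tau_eq] | Y0]; first by rewrite -eqY tau_eq subrr.
by congr (_, _); apply/eqP; rewrite -subr_eq0 eqY Y0.
Qed.

Lemma expK_expansion (l n : int) :
  exists2 q, inZk q & (K ^ l) ^ n = 1 + n%:~R * (K ^ l - 1) + (K ^ l - 1) ^+ 2 * q.
Proof.
apply: Zk_exprz_expansion; first exact: expfz_neq0 K_neq0.
  exact: Zk_expK.
by rewrite invr_expz; apply: Zk_expK.
Qed.

Lemma Zk_small_multiple_eq0 y e (L M : nat) (c : int) :
  inZk e -> y = e * (K ^+ L - 1) -> y * K ^+ M = c%:~R ->
  (`|c| < k ^ L - 1)%N -> y = 0.
Proof.
move=> /inZkE [N [ze eKN]] ye yKM c_small.
have k_gt0 : (0 < k)%N by apply: leq_trans k_ge2.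
have L_gt0 : (0 < L)%N by move: c_small; case: L {ye} => //; rewrite expn0 subnn.
have eq_int : c * (k ^ N)%:Z = ze * ((k ^ L - 1) * k ^ M)%:Z.
  apply: (@intr_inj rat); rewrite !intrM -!pmulrn natrM natrB ?expn_gt0 ?k_gt0 //.
  by rewrite !natrX -yKM -eKN ye; ring.
have cop : coprime (k ^ L - 1) (k ^ N).
  apply/coprimeXr/(coprime_dvdr _ (coprimenS _)).
  by rewrite subn1 prednK ?expn_gt0 ?k_gt0 // -(prednK L_gt0) expnS dvdn_mulr.
have dvd_c : (k ^ L - 1 %| `|c|)%N.
  rewrite -(Gauss_dvdl _ cop); have := congr1 absz eq_int.
  by rewrite !abszM !absz_nat => ->; rewrite dvdn_mull ?dvdn_mulr.
have /eqP c0 : c == 0.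
  by rewrite -absz_eq0; apply: contraLR dvd_c; rewrite -lt0n => /gtnNdvd ->.
by move: yKM; rewrite c0 => /eqP; rewrite mulf_eq0 expf_eq0 (negbTE K_neq0) andbF orbF => /eqP.
Qed.

Lemma inAb_snd1 z : inZk z -> inAb k (z, 1).
Proof. by exists z; split; rewrite // /Defs.gmul /=; congr (_, _); ring. Qed.

Variable gam : gform.
Hypothesis gamP : forall b1, inBS b1 -> inAb k b1 -> forall n l m : int,
  gsat4 k gam (gzpow b1 n) (gzpow b1 l) (gzpow b1 m) b1 <-> n * l = m.

Lemma A1_piF x : inA1 k x -> piF k gam x.
Proof.
case=> r [[Zr [r' [Zr' rr']]] ->{x}] [t c2] Zt [z v2] Zz.
case=> /alphaE [c2E] /beta_snd /= v2E; subst c2 v2.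
have /inZkE [N [n tr'K]] : inZk (t * r') by apply: Zk_mul.
have tK : t * K ^ N = r * n%:~R.
  by transitivity ((r * r') * (t * K ^+ N)); [rewrite rr' mul1r | rewrite -tr'K; ring].
exists (gzpow (z, 1) N); split; first exact: BS_zpow.
exists (gzpow (z, 1) n); split; first exact: BS_zpow.
split; first exact/gcomm_eq1/gzpow_commute.
split; first exact: alpha_A.
split; first by rewrite gconj_A; apply: alpha_A.
split; first exact/gcomm_eq1/gzpow_commute.
split; first exact: beta_Ab.
move=> v _ w _ [/gcomm_eq1/centAbE -> [/gcomm_eq1/centAbE ->]].
move: v.2 w.2 => l m /(gamP Zz (inAb_snd1 Zz)) <-.
have [q Zq Xn] := expK_expansion l n.
exists (- (r * q), 0); split; first exact/Zk_opp/Zk_mul.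
split; first exact: alpha_A.
rewrite gconj_A gzpow_snd mul1r; apply/(tau_eq_powers _ _ _ _ Xn).
by rewrite tK; ring.
Qed.

Lemma piF_A1 x : inBS x -> piF k gam x -> inA1 k x.
Proof.
move=> Zx /(_ ga (Zk_int 1) gb (Zk_int 0) (conj (alpha_A 1) (beta_Ab 0))).
case=> w [_ [h [_ [_ [/alphaE x_eq [_ [/gcomm_eq1/centAbE h_eq [_ tau_x]]]]]]]].
set r := x.1 in Zx x_eq *; set n := h.2 in h_eq.
have /inZkE [M [c yKM]] : inZk (K ^ w.2 - r * n%:~R).
  exact: Zk_sub (Zk_expK _) (Zk_mul Zx (Zk_int n)).
(* L is large enough for k^L - 1 to exceed the numerator |c|. *)
pose L := (`|c| + 1)%N.
have [|u [Zu [/alphaE u_eq tau_eq]]] :=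
  tau_x _ (@BS_zpow gb L (Zk_int 0)) _ (@BS_zpow gb (n * L) (Zk_int 0)).
  split; first exact/gcomm_eq1/gzpow_commute.
  split; first exact/gcomm_eq1/gzpow_commute.
  by rewrite h_eq; apply/(@gamP gb (Zk_int 0) (inAb_snd1 (Zk_int 0))).
have [q Zq Xn] := expK_expansion L n.
move: tau_eq; rewrite u_eq x_eq gconj_A mul1r => /(tau_eq_powers _ _ _ _ Xn) /eqP.
have L_neq0 : (L%:Z == 0) = false by rewrite /L addn1.
rewrite mulf_eq0 subr_eq0 eq_sym expK_eq1 L_neq0 subr_eq0 => /eqP y_eq.
have y0 : K ^ w.2 - r * n%:~R = 0.
  apply: (Zk_small_multiple_eq0 _ y_eq yKM); first exact: Zk_add (Zk_mul Zx Zq) Zu.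
  by have := ltn_expl L k_ge2; rewrite /L; lia.
have rn : r * n%:~R = K ^ w.2 by apply/eqP; rewrite eq_sym -subr_eq0 y0.
exists r; split=> //; split=> //; exists (n%:~R * K ^ (- w.2)); split.
  exact: Zk_mul (Zk_int n) (Zk_expK _).
by rewrite mulrA rn -expfzDr ?K_neq0 // subrr.
Qed.

End BaumslagSolitar.

Theorem lemma4p10 (k : nat) (hk : (2 <= k)%N) (gam : gform)
  (hgam : forall b1, inBS k b1 -> inAb k b1 ->
     forall n l m : int,
       gsat4 k gam (gzpow k b1 n) (gzpow k b1 l) (gzpow k b1 m) b1 <-> n * l = m) :
  forall x, inBS k x -> (piF k gam x <-> inA1 k x).
Proof. by move=> x BSx; split; [apply: piF_A1 | apply: A1_piF]. Qed.
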